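(* The two-dimensional subalgebras of ${\rm A}_1$ are exactly $\langle e_2,e_3\rangle$, $\langle e_1,e_2\rangle$ and $\langle e_1,\alpha e_2+e_3\rangle$ ($\alpha\in\mathbb{C}$). Up to automorphisms of ${\rm A}_1$, every two-dimensional subalgebra is equivalent to $\langle e_1,e_2\rangle$ or $\langle e_2,e_3\rangle$.
   Context: ${\rm A}_1$ is the complex algebra with basis $e_1,e_2,e_3$ whose only nonzero products of basis elements are $e_1e_i=e_ie_1=e_i$ ($i=1,2,3$). A subalgebra is a linear subspace closed under multiplication (it need not contain $e_1$). Two subalgebras are equivalent up to automorphisms if one is mapped onto the other by an algebra automorphism (invertible linear map $\varphi$ with $\varphi(xy)=\varphi(x)\varphi(y)$). $\langle S\rangle$ denotes the linear span of $S$. *)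

From HB Require Import structures.
From mathcomp Require Import all_boot all_order all_algebra.
From mathcomp Require Import complex.
From mathcomp Require Import reals.
Set Implicit Arguments. Unset Strict Implicit. Unset Printing Implicit Defensive.
Import GRing.Theory Num.Theory.
Local Open Scope ring_scope.

Section A1.
Variable C : fieldType.

Definition A1 := 'rV[C]_3.

Definition ebas (i : 'I_3) : A1 := delta_mx 0 i.
Definition e1 : A1 := ebas 0.
Definition e2 : A1 := ebas 1.
Definition e3 : A1 := ebas 2%:R.

Definition A1_tab (i j : 'I_3) : A1 :=
  if i == 0 then ebas j else if j == 0 then ebas i else 0.

Definition A1mul (x y : A1) : A1 :=
  \sum_(i < 3) \sum_(j < 3) (x 0 i * y 0 j) *: A1_tab i j.

Definition is_subalg (V : {vspace A1}) : Prop :=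
  forall x y, x \in V -> y \in V -> A1mul x y \in V.

Definition is_A1aut (f : 'End(A1)) : Prop :=
  bijective f /\ forall x y, f (A1mul x y) = A1mul (f x) (f y).

End A1.

From HB Require Import structures.
From mathcomp Require Import all_boot all_order all_algebra.
From mathcomp Require Import ring.
From mathcomp Require Import complex.
From mathcomp Require Import reals.
Set Implicit Arguments. Unset Strict Implicit. Unset Printing Implicit Defensive.
Import GRing.Theory Num.Theory.
Local Open Scope ring_scope.

(* A1 is the unitization C e1 + N of the algebra N = <e2, e3> with zero
   product: xy = x0 y + y0 x - x0 y0 e1, where x0 is the e1-coordinate.
   A subalgebra containing some x with x0 <> 0 contains e1, since
   x^2 = 2 x0 x - x0^2 e1; every subspace through e1 is a subalgebra, and
   the only 2-dimensional subalgebra missing e1 is N itself.  A plane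
   through e1 is <e1, m> with 0 <> m in N, and normalizing m gives the
   list.  Every invertible map fixing e1 and the e1-coordinate is an
   automorphism; one of them maps alpha e2 + e3 to e2. *)

Lemma span_free_eq (K : fieldType) (vT : vectType K) (X : seq vT)
    (U : {vspace vT}) :
  free X -> {subset X <= U} -> (\dim U <= size X)%N -> <<X>>%VS = U.
Proof.
move=> freeX sXU leUX; apply: span_basis.
by rewrite basisEfree freeX leUX andbT; apply/span_subvP.
Qed.

Section A1Subalgebras.
Variable C : fieldType.
Implicit Types (V : {vspace A1 C}) (x y m : A1 C).
Local Notation E1 := (e1 C).
Local Notation E2 := (e2 C).
Local Notation E3 := (e3 C).
Local Notation N := <<[:: E2; E3]>>%VS.

Lemma ord3P (j : 'I_3) : [\/ j = 0, j = 1 | j = 2%:R].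
Proof.
by case: j => [[|[|[|//]]] lt_j3]; [constructor 1|constructor 2|constructor 3];
  apply/val_inj.
Qed.

Lemma big_ord3 (V : zmodType) (F : 'I_3 -> V) :
  \sum_(i < 3) F i = F 0 + F 1 + F 2%:R.
Proof.
by rewrite !big_ord_recr big_ord0 /= add0r; congr (F _ + F _ + F _); apply/val_inj.
Qed.

Lemma A1mulE x y : A1mul x y = x 0 0 *: y + y 0 0 *: x - (x 0 0 * y 0 0) *: E1.
Proof.
apply/rowP => j; rewrite summxE big_ord3 !summxE !big_ord3 !mxE /A1_tab.
by case: (ord3P j) => ->; rewrite /=; ring.
Qed.

Lemma A1_coordE x : x = x 0 0 *: E1 + x 0 1 *: E2 + x 0 2%:R *: E3.
Proof. by apply/rowP => j; rewrite !mxE; case: (ord3P j) => -> /=; ring. Qed.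

Lemma subalg_e1 V : E1 \in V -> is_subalg V.
Proof. by move=> V1 x y Vx Vy; rewrite A1mulE rpredB ?rpredD ?rpredZ. Qed.

Lemma subalg_unit_e1 V x : is_subalg V -> x \in V -> x 0 0 != 0 -> E1 \in V.
Proof.
move=> subV Vx x0_neq0.
have -> : E1 = (x 0 0 ^+ 2)^-1 *: (x 0 0 *: x + x 0 0 *: x - A1mul x x).
  by apply/rowP => j; rewrite A1mulE !mxE; field.
by rewrite rpredZ // rpredB ?rpredD ?rpredZ // subV.
Qed.

Lemma mem_nil x : (x \in N) = (x 0 0 == 0).
Proof.
apply/idP/eqP => [|x0_eq0].
  rewrite span_cons span_seq1 => /memv_addP[_ /vlineP[k ->] [_ /vlineP[l ->] ->]].
  by rewrite !mxE /= !mulr0 addr0.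
rewrite (A1_coordE x) x0_eq0 scale0r add0r.
by rewrite rpredD ?rpredZ ?memv_span ?inE ?eqxx ?orbT.
Qed.

Lemma subalg_nil : is_subalg N.
Proof.
move=> x y; rewrite !mem_nil A1mulE => /eqP x0_eq0 /eqP y0_eq0.
by rewrite x0_eq0 y0_eq0 !scale0r mul0r scale0r !addr0 subr0 mxE.
Qed.

Lemma free_e1_nil m : m 0 0 = 0 -> m != 0 -> free [:: E1; m].
Proof.
move=> m0_eq0 m_neq0; rewrite free_cons span_seq1 seq1_free m_neq0 andbT.
apply/vlineP => -[k /rowP/(_ 0)].
by rewrite !mxE m0_eq0 mulr0 => /eqP; rewrite oner_eq0.
Qed.

Lemma dim_nil : \dim N = 2%N.
Proof.
apply/eqP; rewrite -/(free _) free_cons span_seq1 seq1_free; apply/andP; split.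
  apply/vlineP => -[k /rowP/(_ 1)].
  by rewrite !mxE mulr0 => /eqP; rewrite oner_eq0.
by apply/eqP => /rowP/(_ 2%:R)/eqP; rewrite !mxE oner_eq0.
Qed.

Lemma subalg_dim2_noe1 V : \dim V = 2%N -> is_subalg V -> E1 \notin V -> V = N.
Proof.
move=> dimV subV V1; apply/eqP; rewrite eqEdim dimV dim_nil leqnn andbT.
apply/subvP => x Vx; rewrite mem_nil; apply: contraNT V1.
exact: subalg_unit_e1.
Qed.

Lemma dim2_e1_span V : \dim V = 2%N -> E1 \in V ->
  exists m, [/\ m 0 0 = 0, m != 0 & V = <<[:: E1; m]>>%VS].
Proof.
move=> dimV V1; have: ~~ (V <= <[E1]>)%VS.
  by apply/negP => /dimvS; rewrite dimV dim_vline; case: (_ != 0).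
case/subvPn => w Vw wNline; exists (w - w 0 0 *: E1).
have m0_eq0 : (w - w 0 0 *: E1) 0 0 = 0 by rewrite !mxE mulr1 subrr.
have m_neq0 : w - w 0 0 *: E1 != 0.
  by apply: contraNneq wNline => /subr0_eq->; rewrite rpredZ ?memv_line.
split=> //; symmetry; apply: span_free_eq; rewrite ?dimV ?free_e1_nil //.
by move=> u; rewrite !inE => /orP[] /eqP->; rewrite ?rpredB ?rpredZ.
Qed.

Lemma span_e1_nilE m : m 0 0 = 0 -> m != 0 ->
  <<[:: E1; m]>>%VS = <<[:: E1; E2]>>%VS \/
  exists a, <<[:: E1; m]>>%VS = <<[:: E1; (a *: E2 + E3)%R]>>%VS.
Proof.
move=> m0_eq0 m_neq0; set U := <<[:: E1; m]>>%VS.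
have U1 : E1 \in U by rewrite memv_span ?mem_head.
have Um : m \in U by rewrite memv_span ?inE ?eqxx ?orbT.
have dimU : (\dim U <= 2)%N by apply: dim_span.
have mE : m = m 0 1 *: E2 + m 0 2%:R *: E3.
  by rewrite {1}(A1_coordE m) m0_eq0 scale0r add0r.
have [m2_eq0|m2_neq0] := eqVneq (m 0 2%:R) 0.
  have m1_neq0 : m 0 1 != 0.
    by apply: contraNneq m_neq0 => m1_eq0; rewrite mE m1_eq0 m2_eq0 !scale0r addr0.
  have E2E : E2 = (m 0 1)^-1 *: m.
    by rewrite {2}mE m2_eq0 scale0r addr0 scalerA mulVf ?scale1r.
  left; symmetry; apply: span_free_eq => //.
    by apply: free_e1_nil; rewrite E2E ?mxE ?m0_eq0 ?mulr0 // scaler_eq0 invr_eq0 negb_or m1_neq0.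
  by move=> u; rewrite !inE => /orP[] /eqP->; rewrite ?E2E ?rpredZ.
right; exists (m 0 1 / m 0 2%:R).
have vE : m 0 1 / m 0 2%:R *: E2 + E3 = (m 0 2%:R)^-1 *: m.
  by rewrite {4}mE scalerDr !scalerA mulVf // scale1r mulrC.
symmetry; apply: span_free_eq => //; rewrite vE.
  by apply: free_e1_nil; rewrite ?mxE ?m0_eq0 ?mulr0 // scaler_eq0 invr_eq0 negb_or m2_neq0.
by move=> u; rewrite !inE => /orP[] /eqP->; rewrite ?rpredZ.
Qed.

Lemma subalg_dim2P V : \dim V = 2%N ->
  is_subalg V <->
  [\/ V = N, V = <<[:: E1; E2]>>%VS
    | exists alpha : C, V = <<[:: E1; (alpha *: E2 + E3)%R]>>%VS].
Proof.
move=> dimV; split=> [subV|].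
  have [V1|V1] := boolP (E1 \in V); last by constructor 1; apply: subalg_dim2_noe1.
  have [m [m0_eq0 m_neq0 ->]] := dim2_e1_span dimV V1.
  by case: (span_e1_nilE m0_eq0 m_neq0) => [|[a]] ->; [constructor 2|constructor 3; exists a].
case=> [->|->|[a ->]]; first exact: subalg_nil;
  by apply: subalg_e1; rewrite memv_span ?mem_head.
Qed.

Lemma A1aut_fix_e1 (f : 'End(A1 C)) :
  bijective f -> f E1 = E1 -> (forall x, f x 0 0 = x 0 0) -> is_A1aut f.
Proof.
move=> bij_f fE1 f0; split=> // x y.
by rewrite !A1mulE !f0 linearB linearD !linearZ /= fE1.
Qed.

Lemma A1aut_id : is_A1aut (\1%VF : 'End(A1 C)).
Proof. by split=> [|x y]; [exists \1%VF => x|]; rewrite !id_lfunE. Qed.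

Definition mx3 (rows : seq (seq C)) : 'M[C]_3 :=
  \matrix_(i < 3, j < 3) nth 0 (nth [::] rows i) j.

(* x |-> x0 e1 + x2 e2 + (x1 - a x2) e3 *)
Definition shear_mx a := mx3 [:: [:: 1; 0; 0]; [:: 0; 0; 1]; [:: 0; 1; -a]].
Definition shear_inv_mx a := mx3 [:: [:: 1; 0; 0]; [:: 0; a; 1]; [:: 0; 1; 0]].
Definition shear a : 'End(A1 C) := linfun (mulmxr (shear_mx a)).

Lemma shear_mxK a : shear_mx a *m shear_inv_mx a = 1%:M.
Proof.
apply/matrixP => i j; rewrite !mxE big_ord3 !mxE.
by case: (ord3P i) => ->; case: (ord3P j) => -> /=; ring.
Qed.

Lemma shear_inv_mxK a : shear_inv_mx a *m shear_mx a = 1%:M.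
Proof.
apply/matrixP => i j; rewrite !mxE big_ord3 !mxE.
by case: (ord3P i) => ->; case: (ord3P j) => -> /=; ring.
Qed.

Lemma shear_bij a : bijective (shear a).
Proof.
exists (linfun (mulmxr (shear_inv_mx a)) : 'End(A1 C)) => x;
  by rewrite !lfunE /= -mulmxA ?shear_mxK ?shear_inv_mxK mulmx1.
Qed.

Lemma shear_coord0 a x : shear a x 0 0 = x 0 0.
Proof. by rewrite lfunE !mxE big_ord3 !mxE /=; ring. Qed.

Lemma shear_e1 a : shear a E1 = E1.
Proof.
apply/rowP => j; rewrite lfunE !mxE big_ord3 !mxE.
by case: (ord3P j) => -> /=; ring.
Qed.

Lemma shear_e2e3 a : shear a (a *: E2 + E3) = E2.
Proof.
apply/rowP => j; rewrite lfunE !mxE big_ord3 !mxE.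
by case: (ord3P j) => -> /=; ring.
Qed.

Lemma A1aut_shear a : is_A1aut (shear a).
Proof. exact: A1aut_fix_e1 (shear_bij a) (shear_e1 a) (shear_coord0 a). Qed.

Lemma subalg_dim2_aut V : \dim V = 2%N -> is_subalg V ->
  exists f : 'End(A1 C), is_A1aut f /\
    ((f @: V)%VS = <<[:: E1; E2]>>%VS \/ (f @: V)%VS = N).
Proof.
move=> dimV /(subalg_dim2P dimV)[->|->|[a ->]].
- by exists \1%VF; split; [exact: A1aut_id | right; rewrite lim1g].
- by exists \1%VF; split; [exact: A1aut_id | left; rewrite lim1g].
exists (shear a); split; first exact: A1aut_shear.
by left; rewrite limg_span /= shear_e1 shear_e2e3.
Qed.

End A1Subalgebras.

Theorem mainTheorem5 (R : realType) :
  (forall V : {vspace A1 R[i]}, \dim V = 2%N ->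
     (is_subalg V <->
        [\/ V = <<[:: e2 R[i]; e3 R[i]]>>%VS,
            V = <<[:: e1 R[i]; e2 R[i]]>>%VS
          | exists alpha : R[i],
              V = <<[:: e1 R[i]; (alpha *: e2 R[i] + e3 R[i])%R]>>%VS]))
  /\
  (forall V : {vspace A1 R[i]}, \dim V = 2%N -> is_subalg V ->
     exists f : 'End(A1 R[i]), is_A1aut f /\
       ((f @: V)%VS = <<[:: e1 R[i]; e2 R[i]]>>%VS \/
        (f @: V)%VS = <<[:: e2 R[i]; e3 R[i]]>>%VS)).
Proof.
split=> V dimV; first exact: subalg_dim2P.
exact: subalg_dim2_aut.
Qed.
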